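(* Let $q$, $\lambda\in(0,\infty)$, $U_1,U_2,U_3$ be as in the context. (i) For any constants $\beta_2,\beta_3$, if $R$ denotes the third component of $\beta_2U_2+\beta_3U_3$, then for every $x_0>0$, \[\lim_{N\to\infty}\frac{\int_{x_0}^NR(x,\lambda)\,dx}{\int_{x_0}^NR_1(x,\lambda)\,dx}=0.\] (ii) If $U_1=\tilde a((u')^2,-2uu',u^2)^T+\tilde b(u'v',-(uv'+u'v),uv)^T+\tilde c((v')^2,-2vv',v^2)^T$, then $\tilde a(\lambda)>0$ and $\tilde c(\lambda)>0$ for all $\lambda\in(0,\infty)$.
   Context: $q(x)=\frac{q_0}{x^2}+\frac{q_1}{x}+\sum_{n\ge0}q_{n+2}x^n$, real coefficients, convergent on $(0,\infty)$, $q_0\ge-\tfrac14$, $q_0,q_1$ not both zero; for some $x_0>0$ either $q\in L_1(x_0,\infty)$, or $q'\in L_1(x_0,\infty)$, $q\in AC_{loc}[x_0,\infty)$ and $q\to0$ at $\infty$. Appell system: $(P,Q,R)'=M(P,Q,R)^T$, $M=\begin{pmatrix}0&\lambda-q&0\\-2&0&2(\lambda-q)\\0&-1&0\end{pmatrix}$; $U_1=(P_1,Q_1,R_1)^T$ is its unique solution with $\lim_{x\to\infty}U_1=(\sqrt\lambda,0,1/\sqrt\lambda)^T$. For fixed $c>0$, $\gamma(x)=\int_c^xdt/R_1(t,\lambda)$, $U_2=(P_1\cos2\gamma+(Q_1/R_1)\sin2\gamma-(2/R_1)\cos2\gamma,\ Q_1\cos2\gamma+2\sin2\gamma,\ R_1\cos2\gamma)^T$,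 $U_3=(P_1\sin2\gamma-(Q_1/R_1)\cos2\gamma-(2/R_1)\sin2\gamma,\ Q_1\sin2\gamma-2\cos2\gamma,\ R_1\sin2\gamma)^T$. For fixed $A>0$, $u,v$ solve $-y''+qy=\lambda y$ with $u(A)=1,u'(A)=0,v(A)=0,v'(A)=1$, and $\tilde a,\tilde b,\tilde c$ are real. *)

From Stdlib Require Import Reals.
From Coquelicot Require Import Coquelicot.
Open Scope R_scope.

(* The potential: q(x) = q0/x^2 + q1/x + sum_{n>=0} a n x^n  on (0,oo),
   where a n = q_{n+2}. *)
Definition q_form (q0 q1 : R) (a : nat -> R) (x : R) : R :=
  q0 / x ^ 2 + q1 / x + PSeries a x.

Definition L1_tail (f : R -> R) (X : R) : Prop :=
  ex_RInt_gen (fun t => Rabs (f t)) (at_point X) (Rbar_locally p_infty).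

Definition appell_sol (q : R -> R) (lam : R) (P Q Rr : R -> R) : Prop :=
  forall x, 0 < x ->
    is_derive P x ((lam - q x) * Q x) /\
    is_derive Q x (-2 * P x + 2 * (lam - q x) * Rr x) /\
    is_derive Rr x (- Q x).

Definition gam (R1 : R -> R) (c x : R) : R := RInt (fun t => / R1 t) c x.

Definition U2 (P1 Q1 R1 : R -> R) (c x : R) : R * R * R :=
  let g := gam R1 c x in
  (P1 x * cos (2 * g) + (Q1 x / R1 x) * sin (2 * g) - (2 / R1 x) * cos (2 * g),
   Q1 x * cos (2 * g) + 2 * sin (2 * g),
   R1 x * cos (2 * g)).

Definition U3 (P1 Q1 R1 : R -> R) (c x : R) : R * R * R :=
  let g := gam R1 c x in
  (P1 x * sin (2 * g) - (Q1 x / R1 x) * cos (2 * g) - (2 / R1 x) * sin (2 * g),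
   Q1 x * sin (2 * g) - 2 * cos (2 * g),
   R1 x * sin (2 * g)).

Definition third (t : R * R * R) : R := snd t.

Definition sl_sol (q : R -> R) (lam : R) (y dy : R -> R) : Prop :=
  forall x, 0 < x -> is_derive y x (dy x) /\ is_derive dy x ((q x - lam) * y x).

From Stdlib Require Import Reals Lra.
From Coquelicot Require Import Coquelicot.
Open Scope R_scope.

(* The Appell system conserves 4 P R - Q^2, which equals 4 in the limit at
   infinity; hence R1 never vanishes and, tending to 1/sqrt lam, is positive.
   (i) Writing gamma' = 1/R1, the integrand R1 (b2 cos 2gamma + b3 sin 2gamma)
   is the derivative of the bounded function R1^2 (b2 sin 2gamma - b3 cos 2gamma)/2
   up to the error R1 Q1 (b2 sin 2gamma - b3 cos 2gamma), which tends to 0.  So its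
   integral over [x0, N] is o(N), whereas that of R1 grows like N / sqrt lam.
   (ii) At x = A the representation gives P1 = c, Q1 = -b, R1 = a, so a > 0 and
   4ac - b^2 = 4 forces c > 0. *)

(* [auto_derive] leaves [Derive] applied to eta-expanded functions, out of
   reach of [rewrite is_derive_unique]. *)
Ltac rewrite_is_derive H :=
  let e := type of H in
  match e with is_derive ?f ?t ?l =>
    replace (Derive (fun x : R => f x) t) with l
      by (symmetry; apply is_derive_unique; exact H)
  end.

Lemma is_lim_p_infty_ball (f : R -> R) (l eps : R) :
  is_lim f p_infty l -> 0 < eps ->
  exists M, forall y, M < y -> Rabs (f y - l) < eps.
Proof.
intros Hf Heps. apply is_lim_spec in Hf. exact (Hf (mkposreal eps Heps)).
Qed.

Lemma is_lim_0_of_abs_le (f g : R -> R) :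
  (exists M, forall x, M < x -> Rabs (f x) <= g x) ->
  is_lim g p_infty 0 -> is_lim f p_infty 0.
Proof.
intros [M HM] Hg.
apply is_lim_le_le_loc with (fun x => - g x) g; [| | exact Hg].
- exists M. intros x Hx. apply Rabs_le_between, HM, Hx.
- replace (Finite 0) with (Rbar_opp 0) by (simpl; f_equal; ring).
  apply is_lim_opp, Hg.
Qed.

Lemma is_lim_bounded_div_id (f : R -> R) (B : R) :
  (exists M, forall x, M < x -> Rabs (f x) <= B) ->
  is_lim (fun x => f x / x) p_infty 0.
Proof.
intros [M HM].
apply is_lim_0_of_abs_le with (fun x => B * / x).
- exists (Rmax M 0). intros x Hx.
  assert (HxM : M < x) by (eapply Rle_lt_trans; [apply Rmax_l | exact Hx]).
  assert (Hx0 : 0 < x) by (eapply Rle_lt_trans; [apply Rmax_r | exact Hx]).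
  unfold Rdiv. rewrite Rabs_mult, Rabs_inv, (Rabs_right x) by lra.
  apply Rmult_le_compat_r; [left; apply Rinv_0_lt_compat, Hx0 | apply HM, HxM].
- replace (Finite 0) with (Rbar_mult B (Rbar_inv p_infty)) by (simpl; f_equal; ring).
  apply is_lim_scal_l, is_lim_inv; [apply is_lim_id | discriminate].
Qed.

Lemma ex_RInt_pos (f : R -> R) (a b : R) :
  (forall x, 0 < x -> continuous f x) -> 0 < a -> 0 < b -> ex_RInt f a b.
Proof.
intros Hf Ha Hb. apply (@ex_RInt_continuous R_CompleteNormedModule).
intros x [Hx _]. apply Hf.
eapply Rlt_le_trans; [apply Rmin_glb_lt; [exact Ha | exact Hb] | exact Hx].
Qed.

Lemma RInt_derive_pos (F f : R -> R) (a b : R) :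
  (forall x, 0 < x -> is_derive F x (f x)) ->
  (forall x, 0 < x -> continuous f x) ->
  0 < a -> 0 < b -> RInt f a b = F b - F a.
Proof.
intros HF Hf Ha Hb.
assert (Hab : 0 < Rmin a b) by (apply Rmin_glb_lt; assumption).
apply is_RInt_unique, (is_RInt_derive F f); intros x [Hx _];
  [apply HF | apply Hf]; lra.
Qed.

Lemma is_derive_RInt_pos (f : R -> R) (c x : R) :
  (forall x, 0 < x -> continuous f x) -> 0 < c -> 0 < x ->
  is_derive (fun y => RInt f c y) x (f x).
Proof.
intros Hf Hc Hx. apply (@is_derive_RInt R_CompleteNormedModule f (fun y => RInt f c y) c x).
- apply locally_interval with 0 p_infty; [simpl; lra | simpl; auto |].
  intros y Hy _. apply (@RInt_correct R_CompleteNormedModule), ex_RInt_pos; auto.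
- apply Hf, Hx.
Qed.

Lemma derive_0_eq_lim (f : R -> R) (l : R) :
  (forall x, 0 < x -> is_derive f x 0) -> is_lim f p_infty l ->
  forall x, 0 < x -> f x = l.
Proof.
intros Hf Hl x Hx.
assert (Hc : is_lim (fun _ => f x) p_infty l).
{ apply is_lim_ext_loc with f; [| exact Hl]. exists x. intros y Hy.
  symmetry. apply eq_is_derive; [intros t Ht; apply Hf |]; lra. }
apply is_lim_unique in Hc. rewrite Lim_const in Hc. now injection Hc.
Qed.

Lemma pos_of_neq0_is_lim_pos (f : R -> R) (l : R) :
  (forall x, 0 < x -> continuous f x) -> (forall x, 0 < x -> f x <> 0) ->
  is_lim f p_infty l -> 0 < l -> forall x, 0 < x -> 0 < f x.
Proof.
intros Hc Hnz Hl Hl0 x Hx.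
destruct (Rlt_or_le 0 (f x)) as [Hpos | Hneg]; [exact Hpos | exfalso].
assert (Hfx : f x < 0) by (destruct Hneg; [assumption | now elim (Hnz x Hx)]).
destruct (is_lim_p_infty_ball f l (l / 2) Hl) as [M HM]; [lra |].
set (y := Rmax x M + 1).
assert (Hy : x < y /\ M < y)
  by (unfold y; pose proof (Rmax_l x M); pose proof (Rmax_r x M); lra).
assert (Hfy : 0 < f y)
  by (pose proof (HM y (proj2 Hy)) as Hb; apply Rabs_def2 in Hb; lra).
destruct (Ranalysis5.IVT_interv f x y) as [z [Hz Hfz]]; try tauto.
- intros t Ht. apply continuity_pt_filterlim, Hc. lra.
- apply (Hnz z); [lra | exact Hfz].
Qed.

Lemma is_lim_RInt_div_id_0 (f : R -> R) (x0 : R) :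
  (forall x, 0 < x -> continuous f x) -> 0 < x0 -> is_lim f p_infty 0 ->
  is_lim (fun N => RInt f x0 N / N) p_infty 0.
Proof.
intros Hf Hx0 Hl. apply is_lim_spec. intros [eps Heps]. simpl.
destruct (is_lim_p_infty_ball f 0 (eps / 2) Hl) as [M HM]; [lra |].
set (M' := Rmax M x0 + 1).
assert (HM' : M < M' /\ x0 < M')
  by (unfold M'; pose proof (Rmax_l M x0); pose proof (Rmax_r M x0); lra).
set (C := Rabs (RInt f x0 M')).
exists (Rmax M' (2 * C / eps)). intros N HN.
assert (HNM : M' < N) by (eapply Rle_lt_trans; [apply Rmax_l | exact HN]).
assert (HNC : 2 * C < eps * N).
{ assert (H2 : 2 * C / eps < N) by (eapply Rle_lt_trans; [apply Rmax_r | exact HN]).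
  apply Rlt_div_l in H2; lra. }
assert (Htail : Rabs (RInt f M' N) <= (N - M') * (eps / 2)).
{ apply abs_RInt_le_const; [lra | apply ex_RInt_pos; auto; lra |].
  intros t Ht. pose proof (HM t ltac:(lra)) as Hb. rewrite Rminus_0_r in Hb. lra. }
rewrite <- (RInt_Chasles f x0 M' N) by (apply ex_RInt_pos; auto; lra).
change (plus (RInt f x0 M') (RInt f M' N)) with (RInt f x0 M' + RInt f M' N).
pose proof (Rabs_triang (RInt f x0 M') (RInt f M' N)).
rewrite Rminus_0_r. unfold Rdiv.
rewrite Rabs_mult, Rabs_inv, (Rabs_right N) by lra.
apply Rlt_div_l; [lra |].
assert (0 < eps * M') by (apply Rmult_lt_0_compat; lra).
unfold C in HNC. nra.
Qed.

Lemma is_lim_RInt_div_id (f : R -> R) (x0 l : R) :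
  (forall x, 0 < x -> continuous f x) -> 0 < x0 -> is_lim f p_infty l ->
  is_lim (fun N => RInt f x0 N / N) p_infty l.
Proof.
intros Hf Hx0 Hl.
set (g := fun x => f x - l).
assert (Hg : forall x, 0 < x -> continuous g x)
  by (intros x Hx; apply (continuous_minus f (fun _ => l)), continuous_const; auto).
assert (Hgl : is_lim g p_infty 0).
{ eapply is_lim_minus; [exact Hl | apply is_lim_const |].
  unfold is_Rbar_minus, is_Rbar_plus; simpl. do 2 f_equal. ring. }
apply is_lim_ext_loc with (fun N => RInt g x0 N / N + l - (l * x0) / N).
- exists 0. intros N HN.
  assert (HgN : RInt g x0 N = RInt f x0 N - (N - x0) * l).
  { unfold g. rewrite (RInt_minus f (fun _ => l)), RInt_const;
      [reflexivity | apply ex_RInt_pos; auto | apply ex_RInt_const]. }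
  rewrite HgN. field. lra.
- apply is_lim_minus with (Finite l) (Finite 0).
  + apply is_lim_plus with (Finite 0) (Finite l).
    * apply is_lim_RInt_div_id_0; auto.
    * apply is_lim_const.
    * unfold is_Rbar_plus; simpl. do 2 f_equal. ring.
  + apply is_lim_bounded_div_id with (Rabs (l * x0)). exists 0. intros. lra.
  + unfold is_Rbar_minus, is_Rbar_plus; simpl. do 2 f_equal. ring.
Qed.

Section RotatedIntegral.

Variables (R1 Q1 g : R -> R) (L b2 b3 : R).
Hypothesis L_pos : 0 < L.
Hypothesis R1_derive : forall x, 0 < x -> is_derive R1 x (- Q1 x).
Hypothesis Q1_ex_derive : forall x, 0 < x -> ex_derive Q1 x.
Hypothesis g_derive : forall x, 0 < x -> is_derive g x (/ R1 x).
Hypothesis R1_neq0 : forall x, 0 < x -> R1 x <> 0.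
Hypothesis R1_lim : is_lim R1 p_infty L.
Hypothesis Q1_lim : is_lim Q1 p_infty 0.

Definition rotated (x : R) : R :=
  b2 * (R1 x * cos (2 * g x)) + b3 * (R1 x * sin (2 * g x)).

Definition conj_rotation (x : R) : R := b2 * sin (2 * g x) - b3 * cos (2 * g x).

Lemma Rabs_conj_rotation_le x : Rabs (conj_rotation x) <= Rabs b2 + Rabs b3.
Proof.
unfold conj_rotation.
pose proof (SIN_bound (2 * g x)); pose proof (COS_bound (2 * g x)).
unfold Rabs; repeat destruct Rcase_abs; nra.
Qed.

Lemma is_derive_rotated_primitive x : 0 < x ->
  is_derive (fun y => R1 y ^ 2 * conj_rotation y / 2) x
    (rotated x - R1 x * Q1 x * conj_rotation x).
Proof.
intros Hx. pose proof (R1_derive x Hx) as HR. pose proof (g_derive x Hx) as Hg.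
unfold rotated, conj_rotation. auto_derive.
- repeat split; eexists; eassumption.
- rewrite_is_derive HR; rewrite_is_derive Hg. field. apply R1_neq0, Hx.
Qed.

Lemma continuous_rotated_terms x : 0 < x ->
  continuous rotated x /\ continuous (fun y => R1 y * Q1 y * conj_rotation y) x.
Proof.
intros Hx.
assert (HR : ex_derive R1 x) by (eexists; apply R1_derive, Hx).
assert (Hg : ex_derive g x) by (eexists; apply g_derive, Hx).
pose proof (Q1_ex_derive x Hx).
unfold rotated, conj_rotation.
split; apply (@ex_derive_continuous R_AbsRing R_NormedModule);
  auto_derive; repeat split; auto.
Qed.

Lemma RInt_rotated x0 N : 0 < x0 -> 0 < N ->
  RInt rotated x0 N =
    R1 N ^ 2 * conj_rotation N / 2 - R1 x0 ^ 2 * conj_rotation x0 / 2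
    + RInt (fun y => R1 y * Q1 y * conj_rotation y) x0 N.
Proof.
intros Hx0 HN.
set (e := fun y => R1 y * Q1 y * conj_rotation y).
assert (He : forall x, 0 < x -> continuous e x)
  by (intros x Hx; apply continuous_rotated_terms, Hx).
assert (Hh : forall x, 0 < x -> continuous rotated x)
  by (intros x Hx; apply continuous_rotated_terms, Hx).
assert (Hdiff : RInt (fun y => rotated y - e y) x0 N = RInt rotated x0 N - RInt e x0 N)
  by (apply (RInt_minus rotated e); apply ex_RInt_pos; auto).
rewrite <- (RInt_derive_pos (fun y => R1 y ^ 2 * conj_rotation y / 2)
              (fun y => rotated y - e y)); auto.
- lra.
- apply is_derive_rotated_primitive.
- intros x Hx. apply (continuous_minus rotated e); auto.
Qed.

Lemma is_lim_RInt_rotated_div_id x0 : 0 < x0 ->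
  is_lim (fun N => RInt rotated x0 N / N) p_infty 0.
Proof.
intros Hx0.
set (K := Rabs b2 + Rabs b3).
set (H := fun y => R1 y ^ 2 * conj_rotation y / 2).
set (e := fun y => R1 y * Q1 y * conj_rotation y).
assert (H_bounded : exists M, forall y, M < y -> Rabs (H y) <= (L + 1) ^ 2 * K / 2).
{ destruct (is_lim_p_infty_ball R1 L 1 R1_lim) as [M HM]; [lra |].
  exists M. intros y Hy. pose proof (HM y Hy) as HRy. apply Rabs_def2 in HRy.
  pose proof (Rabs_conj_rotation_le y). pose proof (Rabs_pos (conj_rotation y)).
  unfold H. unfold Rdiv. rewrite !Rabs_mult, Rabs_inv, <- RPow_abs, (Rabs_right 2) by lra.
  assert (Rabs (R1 y) ^ 2 <= (L + 1) ^ 2)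
    by (apply pow_incr; split; [apply Rabs_pos | apply Rabs_le; lra]).
  apply Rmult_le_compat_r; [lra |]. apply Rmult_le_compat; auto. apply pow_le, Rabs_pos. }
assert (e_lim : is_lim e p_infty 0).
{ apply is_lim_0_of_abs_le with (fun y => K * Rabs (R1 y * Q1 y)).
  - exists 0. intros y _. unfold e. rewrite (Rabs_mult (R1 y * Q1 y)), Rmult_comm.
    apply Rmult_le_compat_r; [apply Rabs_pos | apply Rabs_conj_rotation_le].
  - replace (Finite 0) with (Rbar_mult K (Rbar_abs (Rbar_mult L 0)))
      by (simpl; rewrite Rmult_0_r, Rabs_R0; f_equal; ring).
    apply is_lim_scal_l, is_lim_Rabs, is_lim_mult; auto. simpl; auto. }
apply is_lim_ext_loc with (fun N => H N / N - H x0 / N + RInt e x0 N / N).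
- exists 0. intros N HN. rewrite RInt_rotated by auto. unfold H, e.
  (* The cast to R lets [field] treat the integral as an atom. *)
  set (I := RInt (fun y => R1 y * Q1 y * conj_rotation y) x0 N : R). field. lra.
- apply is_lim_plus with (Finite 0) (Finite 0).
  + apply is_lim_minus with (Finite 0) (Finite 0).
    * exact (is_lim_bounded_div_id H _ H_bounded).
    * apply is_lim_bounded_div_id with (Rabs (H x0)). exists 0. intros. lra.
    * unfold is_Rbar_minus, is_Rbar_plus; simpl. do 2 f_equal. ring.
  + apply is_lim_RInt_div_id_0; auto.
    intros x Hx. apply continuous_rotated_terms, Hx.
  + unfold is_Rbar_plus; simpl. do 2 f_equal. ring.
Qed.

Lemma is_lim_RInt_rotated_ratio x0 : 0 < x0 ->
  is_lim (fun N => RInt rotated x0 N / RInt R1 x0 N) p_infty 0.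
Proof.
intros Hx0.
assert (R1_cont : forall x, 0 < x -> continuous R1 x)
  by (intros x Hx; apply (@ex_derive_continuous R_AbsRing R_NormedModule);
      eexists; apply R1_derive, Hx).
apply is_lim_ext_loc with (fun N => (RInt rotated x0 N / N) / (RInt R1 x0 N / N)).
- exists 0. intros N HN. unfold Rdiv. rewrite Rinv_mult, Rinv_inv.
  replace (RInt rotated x0 N * / N * (/ RInt R1 x0 N * N))
    with (RInt rotated x0 N * / RInt R1 x0 N * (N * / N)) by ring.
  rewrite Rinv_r by lra. ring.
- replace (Finite 0) with (Rbar_div 0 L) by (simpl; f_equal; ring).
  apply is_lim_div.
  + apply is_lim_RInt_rotated_div_id, Hx0.
  + apply is_lim_RInt_div_id; auto.
  + intros HL. injection HL. lra.
  + simpl; auto.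
Qed.

End RotatedIntegral.

Section AppellSystem.

Variables (q : R -> R) (lam : R) (P1 Q1 R1 : R -> R).
Hypothesis appell : appell_sol q lam P1 Q1 R1.
Hypothesis lam_pos : 0 < lam.
Hypothesis P1_lim : is_lim P1 p_infty (sqrt lam).
Hypothesis Q1_lim : is_lim Q1 p_infty 0.
Hypothesis R1_lim : is_lim R1 p_infty (/ sqrt lam).

Lemma is_derive_appell_invariant x : 0 < x ->
  is_derive (fun y => 4 * P1 y * R1 y - Q1 y ^ 2) x 0.
Proof.
intros Hx. destruct (appell x Hx) as [HP [HQ HR]].
auto_derive.
- repeat split; eexists; eassumption.
- rewrite_is_derive HP; rewrite_is_derive HQ; rewrite_is_derive HR. ring.
Qed.

Lemma appell_invariant x : 0 < x -> 4 * P1 x * R1 x - Q1 x ^ 2 = 4.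
Proof.
revert x. apply (derive_0_eq_lim (fun y => 4 * P1 y * R1 y - Q1 y ^ 2)).
{ exact is_derive_appell_invariant. }
assert (Hs : 0 < sqrt lam) by (apply sqrt_lt_R0, lam_pos).
apply is_lim_ext with (fun y => 4 * P1 y * R1 y - Q1 y * Q1 y); [intros; ring |].
eapply is_lim_minus.
- apply is_lim_mult; [apply is_lim_scal_l, P1_lim | exact R1_lim | simpl; auto].
- apply is_lim_mult; [exact Q1_lim | exact Q1_lim | simpl; auto].
- unfold is_Rbar_minus, is_Rbar_plus; simpl. do 2 f_equal. field. lra.
Qed.

Lemma appell_R1_neq0 x : 0 < x -> R1 x <> 0.
Proof.
intros Hx H0. pose proof (appell_invariant x Hx) as Hinv. rewrite H0 in Hinv. nra.
Qed.

Lemma appell_R1_pos x : 0 < x -> 0 < R1 x.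
Proof.
apply (pos_of_neq0_is_lim_pos R1 (/ sqrt lam)); auto.
- intros y Hy. apply (@ex_derive_continuous R_AbsRing R_NormedModule).
  eexists. apply (appell y Hy).
- exact appell_R1_neq0.
- apply Rinv_0_lt_compat, sqrt_lt_R0, lam_pos.
Qed.

End AppellSystem.

Theorem lemma3 (q0 q1 : R) (a : nat -> R) (q : R -> R) (lam : R)
  (P1 Q1 R1 : R -> R) :
  (forall x, 0 < x -> ex_pseries a x) ->
  (forall x, 0 < x -> q x = q_form q0 q1 a x) ->
  q0 >= -1/4 ->
  ~ (q0 = 0 /\ q1 = 0) ->
  (exists X, 0 < X /\
     (L1_tail q X \/
      (L1_tail (Derive q) X /\ is_lim q p_infty 0))) ->
  0 < lam ->
  appell_sol q lam P1 Q1 R1 ->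
  is_lim P1 p_infty (sqrt lam) ->
  is_lim Q1 p_infty 0 ->
  is_lim R1 p_infty (/ sqrt lam) ->
  (* (i) *)
  (forall (c b2 b3 x0 : R), 0 < c -> 0 < x0 ->
     is_lim
       (fun N =>
          RInt (fun x => b2 * third (U2 P1 Q1 R1 c x) + b3 * third (U3 P1 Q1 R1 c x)) x0 N
          / RInt R1 x0 N)
       p_infty 0)
  /\
  (* (ii) *)
  (forall (A : R) (u du v dv : R -> R) (at_ bt ct : R), 0 < A ->
     sl_sol q lam u du -> u A = 1 -> du A = 0 ->
     sl_sol q lam v dv -> v A = 0 -> dv A = 1 ->
     (forall x, 0 < x ->
        P1 x = at_ * (du x) ^ 2 + bt * (du x * dv x) + ct * (dv x) ^ 2 /\
        Q1 x = at_ * (-2 * u x * du x) + bt * (- (u x * dv x + du x * v x))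
               + ct * (-2 * v x * dv x) /\
        R1 x = at_ * (u x) ^ 2 + bt * (u x * v x) + ct * (v x) ^ 2) ->
     0 < at_ /\ 0 < ct).
Proof.
intros _ _ _ _ _ Hlam Happ HP HQ HR.
pose proof (appell_R1_neq0 q lam P1 Q1 R1 Happ Hlam HP HQ HR) as R1_neq0.
split.
- intros c b2 b3 x0 Hc Hx0.
  apply (is_lim_RInt_rotated_ratio R1 Q1 (gam R1 c) (/ sqrt lam)); auto.
  + apply Rinv_0_lt_compat, sqrt_lt_R0, Hlam.
  + intros x Hx. apply (Happ x Hx).
  + intros x Hx. eexists. apply (Happ x Hx).
  + intros x Hx. apply (is_derive_RInt_pos (fun t => / R1 t)); auto.
    intros y Hy. apply (@ex_derive_continuous R_AbsRing R_NormedModule). auto_derive.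
    split; [eexists; apply (Happ y Hy) | split; [apply R1_neq0, Hy | auto]].
- intros A u du v dv at_ bt ct HA _ uA duA _ vA dvA Hrep.
  destruct (Hrep A HA) as [HPA [HQA HRA]].
  rewrite uA, duA, vA, dvA in *.
  pose proof (appell_invariant q lam P1 Q1 R1 Happ Hlam HP HQ HR A HA) as Hinv.
  pose proof (appell_R1_pos q lam P1 Q1 R1 Happ Hlam HP HQ HR A HA) as HRpos.
  rewrite HPA, HQA, HRA in Hinv. rewrite HRA in HRpos.
  assert (Hat : 0 < at_) by nra.
  split; nra.
Qed.
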